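(* Let $f:\mathbb{R}^2\to\mathbb{R}^2$ be $f(x,y)=(2x,\tfrac{1}{2}y)$ and let $g:\mathbb{R}^2\to\mathbb{R}^2$ be a homeomorphism topologically conjugate to $f$ (i.e. $g=h\circ f\circ h^{-1}$ for some homeomorphism $h$ of $\mathbb{R}^2$). Then $g$ does not satisfy the topological shadowing property.
   Context: Let $(X,d)$ be a metric space and $f:X\to X$ a homeomorphism; $\mathcal{C}^+=\{\epsilon:X\to\mathbb{R}^+ : \epsilon \text{ continuous}\}$. For $\delta\in\mathcal{C}^+$, a sequence $\{x_n\}_{n\in\mathbb{Z}}\subset X$ is a $\delta$-pseudo-orbit of $f$ if $d(f(x_n),x_{n+1})<\delta(f(x_n))$ for every $n\in\mathbb{Z}$. For $\epsilon\in\mathcal{C}^+$, the sequence $\{x_n\}$ is $\epsilon$-shadowed by an orbit if there is $y\in X$ with $d(f^n(y),x_n)<\epsilon(x_n)$ for every $n\in\mathbb{Z}$. The homeomorphism $f$ satisfies the topological shadowing property if for every $\epsilon\in\mathcal{C}^+$ there exists $\delta\in\mathcal{C}^+$ such that every $\delta$-pseudo-orbit is $\epsilon$-shadowed by an orbit. $\mathbb{R}^2$ carries the Euclidean metric. *)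

From Stdlib Require Import Reals ZArith.
Open Scope R_scope.

Definition R2 : Type := (R * R)%type.

Definition dist2 (p q : R2) : R :=
  sqrt ((fst p - fst q) ^ 2 + (snd p - snd q) ^ 2).

Definition cont22 (F : R2 -> R2) : Prop :=
  forall p e, 0 < e -> exists d, 0 < d /\
    forall q, dist2 q p < d -> dist2 (F q) (F p) < e.

Definition cont2R (F : R2 -> R) : Prop :=
  forall p e, 0 < e -> exists d, 0 < d /\
    forall q, dist2 q p < d -> Rabs (F q - F p) < e.

Definition is_homeo (F Finv : R2 -> R2) : Prop :=
  (forall p, Finv (F p) = p) /\ (forall p, F (Finv p) = p) /\
  cont22 F /\ cont22 Finv.

Definition Cplus (eps : R2 -> R) : Prop :=
  cont2R eps /\ forall p, 0 < eps p.

Definition iterZ (F Finv : R2 -> R2) (n : Z) (p : R2) : R2 :=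
  match n with
  | Z0 => p
  | Zpos k => Nat.iter (Pos.to_nat k) F p
  | Zneg k => Nat.iter (Pos.to_nat k) Finv p
  end.

Definition pseudo_orbit (F : R2 -> R2) (delta : R2 -> R) (x : Z -> R2) : Prop :=
  forall n : Z, dist2 (F (x n)) (x (n + 1)%Z) < delta (F (x n)).

Definition eps_shadowed (F Finv : R2 -> R2) (eps : R2 -> R) (x : Z -> R2) : Prop :=
  exists y : R2, forall n : Z, dist2 (iterZ F Finv n y) (x n) < eps (x n).

Definition topological_shadowing (F Finv : R2 -> R2) : Prop :=
  forall eps, Cplus eps -> exists delta, Cplus delta /\
    forall x : Z -> R2, pseudo_orbit F delta x -> eps_shadowed F Finv eps x.

Definition f0 (p : R2) : R2 := (2 * fst p, / 2 * snd p).

From Stdlib Require Import Reals ZArith Lra Lia Classical Rgeom.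
Open Scope R_scope.

(** Pull everything back through [h] to the linear map [f0].  Since [h^-1] has
    a continuous positive modulus of continuity, [eps] can be chosen so that
    [eps]-shadowing for [g] gives, after [h^-1], shadowing for [f0] within
    [sigma (x, y) = 1/(1+x^2)].  For [eta] small with respect to [delta], the
    sequence following the [f0]-orbit of (1,1) up to time 0 and that of
    (1,1+2 eta) afterwards is mapped by [h] to a [delta]-pseudo-orbit of [g]:
    its only jump has size [eta] before [h].  At times [-N] and [N] the vertical
    error is multiplied by [2^N] and [2^-N], while [sigma <= 1] and
    [sigma <= 4^-N] there, so a shadowing point would have its vertical
    coordinate within [2^-N] of both 1 and [1 + 2 eta]: impossible once
    [2^-N < eta]. *)

Lemma dist2_sym p q : dist2 p q = dist2 q p.
Proof. unfold dist2. f_equal. ring. Qed.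

Lemma dist2_refl p : dist2 p p = 0.
Proof.
  unfold dist2. replace ((fst p - fst p) ^ 2 + (snd p - snd p) ^ 2) with 0 by ring.
  apply sqrt_0.
Qed.

Lemma dist2_triangle p q r : dist2 p r <= dist2 p q + dist2 q r.
Proof.
  destruct p as [a b], q as [c d], r as [e f].
  pose proof (triangle a b e f c d) as H. unfold dist_euc, Rsqr in H.
  assert (Hsq : forall u, u ^ 2 = u * u) by (intro; ring).
  unfold dist2; cbn [fst snd]. rewrite !Hsq. exact H.
Qed.

Lemma Rabs_fst_le_dist2 p q : Rabs (fst p - fst q) <= dist2 p q.
Proof.
  unfold dist2. rewrite <- sqrt_Rsqr_abs. apply sqrt_le_1_alt. unfold Rsqr.
  pose proof (pow2_ge_0 (snd p - snd q)). nra.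
Qed.

Lemma Rabs_snd_le_dist2 p q : Rabs (snd p - snd q) <= dist2 p q.
Proof.
  unfold dist2. rewrite <- sqrt_Rsqr_abs. apply sqrt_le_1_alt. unfold Rsqr.
  pose proof (pow2_ge_0 (fst p - fst q)). nra.
Qed.

Lemma dist2_same_fst a b b' : dist2 (a, b) (a, b') = Rabs (b - b').
Proof.
  unfold dist2; cbn [fst snd]. rewrite <- sqrt_Rsqr_abs. f_equal. unfold Rsqr. ring.
Qed.

Lemma is_lub_approx (E : R -> Prop) m d : is_lub E m -> d < m -> exists r, E r /\ d < r.
Proof.
  intros [_ Hleast] Hd. apply NNPP. intro Hnone.
  assert (Hub : is_upper_bound E d).
  { intros r Hr. apply Rnot_lt_le. intro Hdr. apply Hnone. now exists r. }
  specialize (Hleast d Hub). lra.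
Qed.

Section ContinuityModulus.

Variables (F : R2 -> R2) (tau : R2 -> R).
Hypotheses (F_cont : cont22 F) (tau_Cplus : Cplus tau).

(* The bound is [tau] at the second point rather than at the centre [z]: this
   makes admissibility pass to every ball contained in the ball, whatever its
   centre, which is what makes the largest admissible radius 1-Lipschitz. *)
Definition admissible_radius (z : R2) (r : R) : Prop :=
  0 < r <= 1 /\ forall q1 q2, dist2 q1 z < r -> dist2 q2 z < r ->
    dist2 (F q1) (F q2) < tau q2.

Lemma admissible_radius_exists z : exists r, admissible_radius z r.
Proof.
  destruct tau_Cplus as [tau_cont tau_pos].
  pose proof (tau_pos z) as Hz.
  destruct (tau_cont z (tau z / 3)) as [d1 [Hd1 H1]]; [lra|].
  destruct (F_cont z (tau z / 3)) as [d2 [Hd2 H2]]; [lra|].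
  exists (Rmin 1 (Rmin d1 d2)).
  pose proof (Rmin_l 1 (Rmin d1 d2)). pose proof (Rmin_r 1 (Rmin d1 d2)).
  pose proof (Rmin_l d1 d2). pose proof (Rmin_r d1 d2).
  split.
  - split; [|lra]. apply Rmin_glb_lt; [lra|]. now apply Rmin_glb_lt.
  - intros q1 q2 Hq1 Hq2.
    specialize (H1 q2 ltac:(lra)). apply Rabs_def2 in H1.
    pose proof (H2 q1 ltac:(lra)). pose proof (H2 q2 ltac:(lra)).
    pose proof (dist2_triangle (F q1) (F z) (F q2)).
    rewrite (dist2_sym (F z) (F q2)) in *. lra.
Qed.

Lemma admissible_radius_shift z z' r :
  admissible_radius z r -> dist2 z z' < r -> admissible_radius z' (r - dist2 z z').
Proof.
  intros [Hr HF] Hzz'. split; [split; [lra|]|].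
  - pose proof (sqrt_pos ((fst z - fst z') ^ 2 + (snd z - snd z') ^ 2)).
    unfold dist2 in *. lra.
  - intros q1 q2 Hq1 Hq2. apply HF.
    + pose proof (dist2_triangle q1 z' z). rewrite (dist2_sym z' z) in *. lra.
    + pose proof (dist2_triangle q2 z' z). rewrite (dist2_sym z' z) in *. lra.
Qed.

Lemma admissible_radius_lub z : {m | is_lub (admissible_radius z) m}.
Proof.
  apply completeness; [|apply admissible_radius_exists].
  exists 1. now intros r [[_ Hr] _].
Qed.

Definition max_radius (z : R2) : R := proj1_sig (admissible_radius_lub z).

Lemma max_radius_approx z d :
  d < max_radius z -> exists r, admissible_radius z r /\ d < r.
Proof. apply is_lub_approx. unfold max_radius. apply proj2_sig. Qed.

Lemma max_radius_pos z : 0 < max_radius z.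
Proof.
  destruct (admissible_radius_exists z) as [r Hr].
  pose proof (proj1 (proj2_sig (admissible_radius_lub z)) r Hr) as Hub.
  fold (max_radius z) in Hub. destruct Hr as [[Hr _] _]. lra.
Qed.

Lemma max_radius_lipschitz z z' : max_radius z - dist2 z z' <= max_radius z'.
Proof.
  apply Rnot_lt_le. intro Hlt.
  destruct (max_radius_approx z (max_radius z' + dist2 z z')) as [r [Hr Hlt']]; [lra|].
  pose proof (max_radius_pos z').
  pose proof (admissible_radius_shift z z' r Hr ltac:(lra)) as Hr'.
  pose proof (proj1 (proj2_sig (admissible_radius_lub z')) _ Hr') as Hub.
  fold (max_radius z') in Hub. lra.
Qed.

Lemma continuity_modulus :
  exists eps, Cplus eps /\ forall z q, dist2 q z < eps z -> dist2 (F q) (F z) < tau z.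
Proof.
  exists max_radius. split; [split|].
  - intros p e He. exists e. split; [exact He|]. intros q Hq.
    pose proof (max_radius_lipschitz q p). pose proof (max_radius_lipschitz p q).
    rewrite (dist2_sym p q) in *. apply Rabs_def1; lra.
  - exact max_radius_pos.
  - intros z q Hq.
    destruct (max_radius_approx z (dist2 q z) Hq) as [r [[Hr HF] Hqr]].
    apply HF; [exact Hqr|]. rewrite dist2_refl. lra.
Qed.

End ContinuityModulus.

Lemma iterZ_of_nat F Finv k p : iterZ F Finv (Z.of_nat k) p = Nat.iter k F p.
Proof. destruct k; simpl; [reflexivity|]. now rewrite SuccNat2Pos.id_succ. Qed.

Lemma iterZ_opp_of_nat F Finv k p : iterZ F Finv (- Z.of_nat k) p = Nat.iter k Finv p.
Proof. destruct k; simpl; [reflexivity|]. now rewrite SuccNat2Pos.id_succ. Qed.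

Lemma Z_of_nat_or_opp_succ (n : Z) :
  (exists k, n = Z.of_nat k) \/ (exists k, n = (- Z.of_nat (S k))%Z).
Proof.
  destruct (Z.le_gt_cases 0 n).
  - left. exists (Z.to_nat n). lia.
  - right. exists (Z.to_nat (- n - 1)). lia.
Qed.

Lemma iterZ_succ F Finv : (forall x, F (Finv x) = x) ->
  forall n p, iterZ F Finv (n + 1) p = F (iterZ F Finv n p).
Proof.
  intros FK n p. destruct (Z_of_nat_or_opp_succ n) as [[k ->] | [k ->]].
  - replace (Z.of_nat k + 1)%Z with (Z.of_nat (S k)) by lia.
    now rewrite !iterZ_of_nat.
  - replace (- Z.of_nat (S k) + 1)%Z with (- Z.of_nat k)%Z by lia.
    rewrite !iterZ_opp_of_nat. simpl. now rewrite FK.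
Qed.

Lemma iterZ_unique F Finv (u : Z -> R2) : (forall x, Finv (F x) = x) ->
  (forall n, u (n + 1)%Z = F (u n)) -> forall n, u n = iterZ F Finv n (u 0%Z).
Proof.
  intros FinvK Hu n. destruct (Z_of_nat_or_opp_succ n) as [[k ->] | [k' ->]].
  - rewrite iterZ_of_nat. induction k as [|k IH]; [reflexivity|].
    replace (Z.of_nat (S k)) with (Z.of_nat k + 1)%Z by lia.
    simpl. now rewrite Hu, IH.
  - rewrite iterZ_opp_of_nat. generalize (S k') as k. intro k.
    induction k as [|k IH]; [reflexivity|].
    change (Nat.iter (S k) Finv (u 0%Z)) with (Finv (Nat.iter k Finv (u 0%Z))).
    rewrite <- IH.
    replace (- Z.of_nat k)%Z with (- Z.of_nat (S k) + 1)%Z by lia.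
    now rewrite Hu, FinvK.
Qed.

Lemma iterZ_conj G Ginv F Finv (h : R2 -> R2) :
  (forall x, Ginv (G x) = x) -> (forall x, F (Finv x) = x) ->
  (forall x, G (h x) = h (F x)) ->
  forall n p, iterZ G Ginv n (h p) = h (iterZ F Finv n p).
Proof.
  intros GK FK Hconj n p.
  rewrite (iterZ_unique G Ginv (fun m => h (iterZ F Finv m p)) GK); [reflexivity|].
  intro m. now rewrite iterZ_succ, Hconj.
Qed.

Definition splice_orbits (F Finv : R2 -> R2) (p q : R2) (n : Z) : R2 :=
  iterZ F Finv n (if (n <=? 0)%Z then p else q).

Lemma splice_orbits_succ F Finv p q n : (forall x, F (Finv x) = x) -> n <> 0%Z ->
  splice_orbits F Finv p q (n + 1) = F (splice_orbits F Finv p q n).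
Proof.
  intros FK Hn. unfold splice_orbits.
  destruct (Z.leb_spec n 0), (Z.leb_spec (n + 1) 0); try lia; now apply iterZ_succ.
Qed.

Lemma pseudo_orbit_single_jump G (delta : R2 -> R) (u : Z -> R2) :
  (forall p, 0 < delta p) -> (forall n, n <> 0%Z -> G (u n) = u (n + 1)%Z) ->
  dist2 (G (u 0%Z)) (u 1%Z) < delta (G (u 0%Z)) -> pseudo_orbit G delta u.
Proof.
  intros Hdelta Hstep Hjump n. destruct (Z.eq_dec n 0) as [-> | Hn]; [exact Hjump|].
  rewrite Hstep, dist2_refl by exact Hn. apply Hdelta.
Qed.

Definition f0inv (p : R2) : R2 := (/ 2 * fst p, 2 * snd p).

Lemma f0_f0inv p : f0 (f0inv p) = p.
Proof. destruct p as [a b]. unfold f0, f0inv; simpl. f_equal; field. Qed.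

Lemma f0inv_f0 p : f0inv (f0 p) = p.
Proof. destruct p as [a b]. unfold f0, f0inv; simpl. f_equal; field. Qed.

Lemma iterZ_f0 n p :
  iterZ f0 f0inv n p = (powerRZ 2 n * fst p, powerRZ 2 (- n) * snd p).
Proof.
  set (u := fun m => (powerRZ 2 m * fst p, powerRZ 2 (- m) * snd p)).
  change (iterZ f0 f0inv n p = u n).
  rewrite (iterZ_unique f0 f0inv u f0inv_f0).
  - f_equal. destruct p as [a b]. unfold u; simpl. f_equal; ring.
  - intro m. unfold u, f0; simpl. rewrite Z.opp_add_distr, !powerRZ_add by lra.
    simpl. f_equal; field.
Qed.

Definition sigma (p : R2) : R := / (1 + fst p ^ 2).

Lemma sigma_pos p : 0 < sigma p.
Proof. apply Rinv_0_lt_compat. pose proof (pow2_ge_0 (fst p)). lra. Qed.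

Lemma sigma_le_1 p : sigma p <= 1.
Proof.
  unfold sigma. rewrite <- Rinv_1. apply Rinv_le_contravar; [lra|].
  pose proof (pow2_ge_0 (fst p)). lra.
Qed.

(* [|1/(1+a^2) - 1/(1+b^2)| = |a - b| |a + b| / ((1+a^2)(1+b^2))], and
   [|a| <= (1+a^2)/2]. *)
Lemma sigma_lipschitz p q : Rabs (sigma p - sigma q) <= dist2 p q.
Proof.
  eapply Rle_trans; [|apply Rabs_fst_le_dist2]. unfold sigma.
  set (a := fst p). set (b := fst q).
  assert (Ha : 0 < 1 + a ^ 2) by (pose proof (pow2_ge_0 a); lra).
  assert (Hb : 0 < 1 + b ^ 2) by (pose proof (pow2_ge_0 b); lra).
  replace (/ (1 + a ^ 2) - / (1 + b ^ 2))
    with ((a - b) * (- (a + b) / ((1 + a ^ 2) * (1 + b ^ 2)))) by (field; lra).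
  rewrite Rabs_mult. rewrite <- (Rmult_1_r (Rabs (a - b))) at 2.
  apply Rmult_le_compat_l; [apply Rabs_pos|].
  unfold Rdiv. rewrite Rabs_mult, Rabs_inv, (Rabs_right (_ * _)) by nra.
  apply (Rmult_le_reg_r ((1 + a ^ 2) * (1 + b ^ 2))); [nra|].
  rewrite Rmult_assoc, Rinv_l, Rmult_1_r, Rmult_1_l by nra.
  pose proof (pow2_ge_0 (a * b)).
  pose proof (pow2_ge_0 (a - / 2)). pose proof (pow2_ge_0 (b - / 2)).
  pose proof (pow2_ge_0 (a + / 2)). pose proof (pow2_ge_0 (b + / 2)).
  apply Rabs_le. split; nra.
Qed.

Lemma Cplus_sigma_comp (F : R2 -> R2) : cont22 F -> Cplus (fun z => sigma (F z)).
Proof.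
  intro F_cont. split; [|intro; apply sigma_pos].
  intros p e He. destruct (F_cont p e He) as [d [Hd HF]].
  exists d. split; [exact Hd|]. intros q Hq.
  eapply Rle_lt_trans; [apply sigma_lipschitz | exact (HF q Hq)].
Qed.

Lemma two_scale_estimates_absurd t v eta :
  0 < t -> / t <= eta -> Rabs (t * v - t) < 1 ->
  Rabs (/ t * v - / t * (1 + 2 * eta)) < / (1 + t ^ 2) -> False.
Proof.
  intros Ht Heta Hback Hfwd.
  assert (Hnear1 : Rabs (v - 1) < / t).
  { apply (Rmult_lt_reg_l t); [exact Ht|]. rewrite Rinv_r by lra.
    rewrite <- (Rabs_right t) at 1 by lra. rewrite <- Rabs_mult.
    replace (t * (v - 1)) with (t * v - t) by ring. exact Hback. }
  assert (Hnear2 : Rabs (v - 1 - 2 * eta) < / t).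
  { replace (/ t * v - / t * (1 + 2 * eta)) with (/ t * (v - 1 - 2 * eta)) in Hfwd by ring.
    rewrite Rabs_mult, Rabs_right in Hfwd by (apply Rle_ge, Rlt_le, Rinv_0_lt_compat, Ht).
    apply (Rmult_lt_reg_l (/ t)); [now apply Rinv_0_lt_compat|].
    eapply Rlt_le_trans; [exact Hfwd|].
    rewrite <- Rinv_mult. apply Rinv_le_contravar; nra. }
  apply Rabs_def2 in Hnear1. apply Rabs_def2 in Hnear2.
  assert (0 < / t) by (now apply Rinv_0_lt_compat). lra.
Qed.

Lemma f0_splice_not_sigma_shadowed eta w : 0 < eta ->
  ~ (forall n, dist2 (iterZ f0 f0inv n w) (splice_orbits f0 f0inv (1, 1) (1, 1 + 2 * eta) n)
               < sigma (splice_orbits f0 f0inv (1, 1) (1, 1 + 2 * eta) n)).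
Proof.
  intros Heta Hshadow.
  destruct (pow_lt_1_zero (/ 2) ltac:(rewrite Rabs_right; lra) eta Heta) as [M HM].
  specialize (HM M (le_n _)). rewrite Rabs_right in HM by (apply Rle_ge, pow_le; lra).
  set (N := S M). set (t := 2 ^ N).
  assert (Ht : 0 < t) by (apply pow_lt; lra).
  assert (Hteta : / t <= eta).
  { unfold t, N. rewrite <- pow_inv. simpl. pose proof (pow_le (/ 2) M). lra. }
  pose proof (Hshadow (- Z.of_nat N)%Z) as Hback.
  pose proof (Hshadow (Z.of_nat N)) as Hfwd.
  unfold splice_orbits in Hback, Hfwd.
  replace (- Z.of_nat N <=? 0)%Z with true in Hback by (symmetry; apply Z.leb_le; lia).
  replace (Z.of_nat N <=? 0)%Z with false in Hfwd by (symmetry; apply Z.leb_gt; lia).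
  rewrite !iterZ_f0 in Hback, Hfwd. rewrite Z.opp_involutive in Hback.
  rewrite !powerRZ_neg', <- !pow_powerRZ in Hback, Hfwd.
  fold t in Hback, Hfwd. unfold sigma in Hfwd. cbn [fst snd] in Hback, Hfwd.
  rewrite !Rmult_1_r in Hback. rewrite !Rmult_1_r in Hfwd.
  apply (two_scale_estimates_absurd t (snd w) eta Ht Hteta).
  - pose proof (Rabs_snd_le_dist2 (/ t * fst w, t * snd w) (/ t, t)) as Hsnd.
    pose proof (sigma_le_1 (/ t, t)). cbn [snd] in Hsnd. lra.
  - pose proof (Rabs_snd_le_dist2 (t * fst w, / t * snd w) (t, / t * (1 + 2 * eta))) as Hsnd.
    cbn [snd] in Hsnd. lra.
Qed.

Theorem mainTheorem4 (g ginv h hinv : R2 -> R2) :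
  is_homeo h hinv ->
  is_homeo g ginv ->
  (forall p, g p = h (f0 (hinv p))) ->
  ~ topological_shadowing g ginv.
Proof.
  intros [hK [hK' [h_cont hinv_cont]]] [gK _] Hconj Hshadow.
  assert (Hgh : forall p, g (h p) = h (f0 p)) by (intro p; now rewrite Hconj, hK).
  destruct (continuity_modulus hinv (fun z => sigma (hinv z)) hinv_cont
              (Cplus_sigma_comp hinv hinv_cont)) as [eps [Heps Hmod]].
  destruct (Hshadow eps Heps) as [delta [[_ Hdelta] Hpo]].
  destruct (h_cont (f0 (1, 1)) _ (Hdelta (h (f0 (1, 1))))) as [d [Hd Hhd]].
  set (eta := d / 2).
  set (x := splice_orbits f0 f0inv (1, 1) (1, 1 + 2 * eta)).
  destruct (Hpo (fun n => h (x n))) as [y Hy].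
  { apply pseudo_orbit_single_jump; [exact Hdelta | |].
    - intros n Hn. rewrite Hgh. unfold x. now rewrite (splice_orbits_succ _ _ _ _ _ f0_f0inv Hn).
    - rewrite Hgh, dist2_sym. apply Hhd. simpl. unfold f0; simpl.
      rewrite dist2_same_fst, Rabs_right; unfold eta; lra. }
  apply (f0_splice_not_sigma_shadowed eta (hinv y)); [unfold eta; lra|].
  intro n. specialize (Hmod _ _ (Hy n)).
  rewrite <- (hK' y), (iterZ_conj g ginv f0 f0inv h gK f0_f0inv Hgh), !hK in Hmod.
  exact Hmod.
Qed.
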